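(* Let $k\ge2$, let $U\subseteq\mathbb{R}^d$ be a set of $k$ distinct points, and let $V\subseteq U$ with $|V|\ge2$. Then $L_2'(V)\ge L_2(V)/2$.
   Context: For $V$: for each dimension $i$ let $\mathcal{I}_i$ be the consecutive intervals $[a,b]$ ($a<b$) into which $[\min_{v\in V}v_i,\max_{v\in V}v_i]$ is partitioned by the projections $\{v_i:v\in V\}$; $\mathcal{I}_{\mathrm{all}}(V)=\{(i,[a,b]):[a,b]\in\mathcal{I}_i\}$ and $L_2(V)=\sum_{(i,[a,b])\in\mathcal{I}_{\mathrm{all}}(V)}(b-a)^2$. Let $\Delta(V)=\max_{x,y\in V}\|x-y\|_2^2$. A pair $x,y\in V$ is close if $\|x-y\|_2^2<\Delta(V)/k^4$. Let $R(V)\subseteq\mathcal{I}_{\mathrm{all}}(V)$ be the set of $(i,[a,b])$ such that $[a,b]\subseteq[\min(x_i,y_i),\max(x_i,y_i)]$ for some close pair $x,y\in V$, and $L_2'(V)=\sum_{(i,[a,b])\in\mathcal{I}_{\mathrm{all}}(V)\setminus R(V)}(b-a)^2$. *)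

From HB Require Import structures.
From mathcomp Require Import all_boot all_order all_algebra.
From mathcomp Require Import finmap.
From mathcomp Require Import reals.
Set Implicit Arguments. Unset Strict Implicit. Unset Printing Implicit Defensive.
Import Order.TTheory GRing.Theory Num.Theory.
Local Open Scope ring_scope.
Local Open Scope fset_scope.

Section Defs.
Variables (R : realType) (d : nat).
Notation pt := 'rV[R]_d.

Definition dist2 (x y : pt) : R := \sum_(i < d) (x ord0 i - y ord0 i) ^+ 2.

Definition projs (V : {fset pt}) (i : 'I_d) : seq R :=
  sort <=%R (undup [seq (v : pt) ord0 i | v <- enum_fset V]).

Definition intervals (V : {fset pt}) (i : 'I_d) : seq (R * R) :=
  zip (projs V i) (behead (projs V i)).

Definition Delta (V : {fset pt}) : R :=
  \big[Num.max/0]_(x <- enum_fset V) \big[Num.max/0]_(y <- enum_fset V) dist2 x y.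

Definition close (k : nat) (V : {fset pt}) (x y : pt) : bool :=
  dist2 x y < Delta V / (k%:R ^+ 4).

Definition inRV (k : nat) (V : {fset pt}) (i : 'I_d) (ab : R * R) : bool :=
  has (fun x : pt => has (fun y : pt =>
      [&& x \in V, y \in V, close k V x y,
          Num.min (x ord0 i) (y ord0 i) <= ab.1 &
          ab.2 <= Num.max (x ord0 i) (y ord0 i)]) (enum_fset V)) (enum_fset V).

Definition L2 (V : {fset pt}) : R :=
  \sum_(i < d) \sum_(ab <- intervals V i) (ab.2 - ab.1) ^+ 2.

Definition L2' (k : nat) (V : {fset pt}) : R :=
  \sum_(i < d) \sum_(ab <- intervals V i | ~~ inRV k V i ab) (ab.2 - ab.1) ^+ 2.
End Defs.

From HB Require Import structures.
From mathcomp Require Import all_boot all_order all_algebra.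
From mathcomp Require Import finmap reals.
From mathcomp Require Import ring lra.
Import Order.TTheory GRing.Theory Num.Theory.
Local Open Scope ring_scope.

(* Split L2 V = L2' k V + L2R k V, where L2R collects the intervals of R(V).
   Every interval of R(V) lies between the i-th coordinates of a close pair,
   and disjoint intervals inside a segment have squared lengths summing to at
   most the squared length of the segment; hence L2R is at most the sum of the
   squared distances of close pairs, i.e. at most n^2 Delta / k^4 with
   n = #|V| <= k.  On each coordinate the projections of two points are
   joined by at most n consecutive intervals, so by Cauchy-Schwarz
   Delta <= n L2.  Thus L2R <= n^3 L2 / k^4 <= L2 / k <= L2 / 2. *)

Section RealSequences.
Context {R : realDomainType}.

Lemma sumr_const_seq {T : Type} (r : seq T) (c : R) :
  \sum_(x <- r) c = c *+ size r.
Proof. by rewrite big_const_seq count_predT iter_addr addr0. Qed.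

Lemma sqr_sum_le_size_sum_sqr {T : Type} (r : seq T) (f : T -> R) :
  (\sum_(a <- r) f a) ^+ 2 <= (size r)%:R * \sum_(a <- r) f a ^+ 2.
Proof.
set S := \sum_(a <- r) f a; set Q := \sum_(a <- r) f a ^+ 2.
have lagrange : \sum_(a <- r) \sum_(b <- r) (f a - f b) ^+ 2
                = ((size r)%:R * Q - S ^+ 2) *+ 2.
  under eq_bigr => a _ do
    rewrite (eq_bigr _ (fun b _ => sqrrB (f a) (f b))) !big_split sumrN
            sumr_const_seq sumrMnl -mulr_sumr -/S -/Q.
  rewrite !big_split sumrN /= sumr_const_seq !sumrMnl -mulr_suml -/S -/Q.
  rewrite -mulr_natl; ring.
have : 0 <= \sum_(a <- r) \sum_(b <- r) (f a - f b) ^+ 2.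
  by do 2!(apply: sumr_ge0 => ? _); exact: sqr_ge0.
by rewrite lagrange pmulrn_lge0 // subr_ge0.
Qed.

Lemma sum_sqr_le_sqr_sum {T : eqType} (r : seq T) (P : pred T) (f : T -> R) :
  {in r, forall a, P a -> 0 <= f a} ->
  \sum_(a <- r | P a) f a ^+ 2 <= (\sum_(a <- r | P a) f a) ^+ 2.
Proof.
elim: r => [|a r IH] f_ge0; first by rewrite !big_nil expr0n.
have f_ge0_r : {in r, forall b, P b -> 0 <= f b}.
  by move=> b br; apply: f_ge0; rewrite in_cons br orbT.
rewrite !big_cons; case: ifP => [Pa|_]; last exact: IH.
have S_ge0 : 0 <= \sum_(b <- r | P b) f b.
  by rewrite big_seq_cond sumr_ge0 // => b /andP[/f_ge0_r].
have := IH f_ge0_r; have := mulr_ge0 (f_ge0 a (mem_head a r) Pa) S_ge0.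
rewrite sqrrD; lra.
Qed.

Lemma sum_le_sum_cover {I : Type} {J : eqType} (r : seq I) (js : seq J)
    (P : pred I) (Q : J -> pred I) (F : I -> R) :
  (forall i, 0 <= F i) -> (forall i, P i -> has (fun j => Q j i) js) ->
  \sum_(i <- r | P i) F i <= \sum_(j <- js) \sum_(i <- r | Q j i) F i.
Proof.
move=> F_ge0 cover.
under [X in _ <= X]eq_bigr => j _ do rewrite big_mkcond.
rewrite exchange_big /= big_mkcond /=; apply: ler_sum => i _.
have terms_ge0 (js' : seq J) : 0 <= \sum_(j <- js') (if Q j i then F i else 0).
  by apply: sumr_ge0 => j _; case: ifP.
case: ifP => [/cover /hasP[j j_js Qji] | _] //.
by rewrite (big_rem j j_js) /= Qji lerDl.
Qed.

Implicit Types (s t : seq R) (x lo hi : R).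

Definition gaps s : seq (R * R) := zip s (behead s).

Definition gap_len (ab : R * R) : R := ab.2 - ab.1.

Lemma gap_len_ge0 {s ab} : sorted <=%R s -> ab \in gaps s -> 0 <= gap_len ab.
Proof.
rewrite subr_ge0; elim: s => [//|x [//|y t] IH] /= /andP[xy st].
by rewrite in_cons => /orP[/eqP-> // | ]; exact: IH.
Qed.

Lemma sum_gap_len_cons x t :
  \sum_(ab <- gaps (x :: t)) gap_len ab = last x t - x.
Proof.
elim: t x => [|y t IH] x; first by rewrite big_nil subrr.
by rewrite big_cons IH /gap_len /=; ring.
Qed.

Lemma sorted_le_last {x t u} :
  sorted <=%R (x :: t) -> u \in x :: t -> u <= last x t.
Proof.
elim: t x u => [|y t IH] x u /=; first by rewrite mem_seq1 => _ /eqP->.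
move=> /andP[xy st]; rewrite in_cons => /orP[/eqP->|]; last exact: IH.
exact: le_trans xy (IH y y st (mem_head _ _)).
Qed.

Lemma dist_le_sum_gap_len {s u v} : sorted <=%R s -> u \in s -> v \in s ->
  `|u - v| <= \sum_(ab <- gaps s) gap_len ab.
Proof.
case: s => [//|x t] st us vs; rewrite sum_gap_len_cons.
have head_le w : w \in x :: t -> x <= w.
  rewrite in_cons => /orP[/eqP->//|].
  exact: (allP (order_path_min le_trans st)).
have := sorted_le_last st us; have := sorted_le_last st vs.
have := head_le u us; have := head_le v vs.
by rewrite ler_norml; lra.
Qed.

Lemma sqr_dist_le_size_sum_sqr_gap_len {s u v} :
  sorted <=%R s -> u \in s -> v \in s ->
  (u - v) ^+ 2 <= (size (gaps s))%:R * \sum_(ab <- gaps s) gap_len ab ^+ 2.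
Proof.
move=> st us vs; apply: le_trans (sqr_sum_le_size_sum_sqr _ gap_len).
have sum_ge0 : 0 <= \sum_(ab <- gaps s) gap_len ab.
  by rewrite big_seq sumr_ge0 // => ab; exact: gap_len_ge0.
rewrite -(real_normK (num_real (u - v))) lerXn2r ?nnegrE ?normr_ge0 //.
exact: dist_le_sum_gap_len.
Qed.

Definition gap_within lo hi (ab : R * R) : bool := (lo <= ab.1) && (ab.2 <= hi).

(* Generalized over [z <= max lo x] so that the induction can drop the first
   gap: all gaps of [x :: t] within [lo, hi] lie in [z, hi]. *)
Lemma sum_gap_len_within_cons_le lo hi x t z : sorted <=%R (x :: t) ->
  z <= hi -> z <= Num.max lo x ->
  \sum_(ab <- gaps (x :: t) | gap_within lo hi ab) gap_len ab <= hi - z.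
Proof.
elim: t x z => [|y t IH] x z /=; first by rewrite big_nil subr_ge0.
move=> /andP[xy st] z_hi z_lox; rewrite big_cons /gap_within /=.
case: ifP => [/andP[lo_x y_hi] | _].
  have := IH y y st y_hi; rewrite le_max lexx orbT => /(_ isT).
  by move: z_lox; rewrite max_r // /gap_len /=; lra.
apply: IH => //; move: z_lox; rewrite !le_max => /orP[-> // | z_x].
by rewrite (le_trans z_x xy) orbT.
Qed.

Lemma sum_sqr_gap_len_within_le {lo hi s} : sorted <=%R s -> lo <= hi ->
  \sum_(ab <- gaps s | gap_within lo hi ab) gap_len ab ^+ 2 <= (hi - lo) ^+ 2.
Proof.
case: s => [|x t] st lo_hi; first by rewrite big_nil sqr_ge0.
have len_ge0 :
    {in gaps (x :: t), forall ab, gap_within lo hi ab -> 0 <= gap_len ab}.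
  by move=> ab /(gap_len_ge0 st).
apply: le_trans (sum_sqr_le_sqr_sum _ _ _ len_ge0) _.
rewrite lerXn2r ?nnegrE ?subr_ge0 //.
  by rewrite big_seq_cond sumr_ge0 // => ab /andP[/len_ge0].
by apply: sum_gap_len_within_cons_le => //; rewrite le_max lexx.
Qed.

End RealSequences.

Section Arithmetic.
Context {R : realFieldType}.

Lemma sqr_mul_div_pow4_le_half {K n D L : R} :
  2 <= K -> 0 <= n <= K -> 0 <= L ->
  D <= n * L -> n ^+ 2 * (D / K ^+ 4) <= L / 2.
Proof.
move=> K_ge2 /andP[n_ge0 n_le_K] L_ge0 D_le.
have K_gt0 : 0 < K by lra.
rewrite mulrA ler_pdivrMr ?exprn_gt0 //.
have n3 : n ^+ 3 <= K ^+ 3 by rewrite lerXn2r ?nnegrE // ltW.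
have : n ^+ 2 * D <= n ^+ 3 * L.
  by rewrite (exprSr n 2) -mulrA ler_wpM2l ?exprn_ge0.
have : n ^+ 3 * L <= K ^+ 3 * L by rewrite ler_wpM2r.
have : K ^+ 3 * L * 2 <= K ^+ 3 * L * K.
  by rewrite ler_wpM2l // mulr_ge0 // exprn_ge0 // ltW.
lra.
Qed.

End Arithmetic.

Section Points.
Context {R : realType} {d : nat}.
Notation pt := 'rV[R]_d.
Implicit Types (V : {fset pt}) (k : nat) (i : 'I_d).

Lemma intervalsE V i : intervals V i = gaps (projs V i).
Proof. by []. Qed.

Lemma projs_sorted V i : sorted <=%R (projs V i).
Proof. exact/sort_sorted/le_total. Qed.

Lemma projs_mem V i v : v \in V -> v ord0 i \in projs V i.
Proof. by move=> vV; rewrite mem_sort mem_undup; apply: map_f. Qed.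

Lemma size_intervals_le V i : (size (intervals V i) <= #|` V|)%N.
Proof.
rewrite size_zip size_sort (leq_trans (geq_minl _ _)) //.
by rewrite (leq_trans (size_undup _)) // size_map.
Qed.

Lemma L2_ge0 V : 0 <= L2 V.
Proof. by do 2!(apply: sumr_ge0 => ? _); exact: sqr_ge0. Qed.

Lemma dist2_ge0 (x y : pt) : 0 <= dist2 x y.
Proof. by apply: sumr_ge0 => i _; exact: sqr_ge0. Qed.

Lemma dist2_le_card_L2 V x y :
  x \in V -> y \in V -> dist2 x y <= #|` V|%:R * L2 V.
Proof.
move=> xV yV; rewrite /dist2 /L2 mulr_sumr; apply: ler_sum => i _.
apply: le_trans (sqr_dist_le_size_sum_sqr_gap_len (projs_sorted V i)
  (projs_mem V i x xV) (projs_mem V i y yV)) _.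
rewrite -intervalsE ler_wpM2r ?ler_nat ?size_intervals_le //.
by apply: sumr_ge0 => ab _; exact: sqr_ge0.
Qed.

Lemma Delta_ge0 V : 0 <= Delta V.
Proof.
rewrite /Delta; elim/big_ind: _ => // [a b|x _]; first by rewrite le_max => ->.
by elim/big_ind: _ => // [a b|y _]; [rewrite le_max => -> | exact: dist2_ge0].
Qed.

Lemma Delta_le_card_L2 V : Delta V <= #|` V|%:R * L2 V.
Proof.
have bound_ge0 : 0 <= #|` V|%:R * L2 V by rewrite mulr_ge0 ?L2_ge0.
rewrite /Delta big_seq; apply: bigmax_le => // x xV.
rewrite big_seq; apply: bigmax_le => // y yV.
exact: dist2_le_card_L2.
Qed.

Definition L2R k V : R :=
  \sum_(i < d) \sum_(ab <- intervals V i | inRV k V i ab) (ab.2 - ab.1) ^+ 2.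

Lemma L2_split k V : L2 V = L2' k V + L2R k V.
Proof.
rewrite /L2 /L2' /L2R -big_split; apply: eq_bigr => i _.
by rewrite (bigID (inRV k V i)) /= addrC.
Qed.

Definition point_pairs V : seq (pt * pt) :=
  [seq (x, y) | x <- enum_fset V, y <- enum_fset V].

Definition coord_between (x y : pt) i : pred (R * R) :=
  gap_within (Num.min (x ord0 i) (y ord0 i)) (Num.max (x ord0 i) (y ord0 i)).

Lemma inRV_has_close_pair k V i ab : inRV k V i ab ->
  has (fun p => close k V p.1 p.2 && coord_between p.1 p.2 i ab)
      (point_pairs V).
Proof.
case/hasP=> x xV /hasP[y yV /and5P[_ _ cxy lo hi]]; apply/hasP.
exists (x, y); first exact: allpairs_f.
by rewrite /= cxy /coord_between /gap_within lo hi.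
Qed.

Lemma sum_sqr_intervals_between_le V (x y : pt) i :
  \sum_(ab <- intervals V i | coord_between x y i ab) (ab.2 - ab.1) ^+ 2
    <= (x ord0 i - y ord0 i) ^+ 2.
Proof.
rewrite /coord_between; have [xy|/ltW yx] := leP (x ord0 i) (y ord0 i).
  rewrite -sqrrN opprB.
  exact: sum_sqr_gap_len_within_le (projs_sorted V i) xy.
exact: sum_sqr_gap_len_within_le (projs_sorted V i) yx.
Qed.

Lemma L2R_le_sum_close k V :
  L2R k V <= \sum_(p <- point_pairs V)
               (if close k V p.1 p.2 then dist2 p.1 p.2 else 0).
Proof.
have per_coord i :
    \sum_(ab <- intervals V i | inRV k V i ab) (ab.2 - ab.1) ^+ 2 <=
    \sum_(p <- point_pairs V)
      (if close k V p.1 p.2 then (p.1 ord0 i - p.2 ord0 i) ^+ 2 else 0).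
  apply: le_trans (sum_le_sum_cover _ _ _ _ (fun ab => (ab.2 - ab.1) ^+ 2)
                     (fun ab => sqr_ge0 _) (@inRV_has_close_pair k V i)) _.
  apply: ler_sum => p _; case: (close k V p.1 p.2) => /=.
    exact: sum_sqr_intervals_between_le.
  by rewrite big_pred0.
apply: le_trans (ler_sum _ (fun i _ => per_coord i)) _.
rewrite exchange_big /=; apply: ler_sum => p _.
by case: (close k V p.1 p.2); [exact: lexx | rewrite big1].
Qed.

Lemma L2R_le k V : L2R k V <= #|` V|%:R ^+ 2 * (Delta V / k%:R ^+ 4).
Proof.
apply: le_trans (L2R_le_sum_close k V) _.
apply: (@le_trans _ _ (\sum_(p <- point_pairs V) (Delta V / k%:R ^+ 4))).
  apply: ler_sum => p _; case: ifP => [/ltW // | _].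
  by rewrite divr_ge0 ?Delta_ge0 ?exprn_ge0.
by rewrite sumr_const_seq size_allpairs -[leLHS]mulr_natl natrM expr2.
Qed.

End Points.

Local Open Scope fset_scope.

Theorem proposition4p4 (R : realType) (d k : nat) (U V : {fset 'rV[R]_d}) :
  (2 <= k)%N -> #|` U| = k -> V `<=` U -> (2 <= #|` V|)%N ->
  L2 V / 2 <= L2' k V.
Proof.
move=> k_ge2 card_U sub_VU _.
have n_le_k : #|` V|%:R <= k%:R :> R.
  by rewrite ler_nat -card_U fsubset_leq_card.
have k_ge2R : 2 <= k%:R :> R by rewrite (ler_nat R 2).
have n_range : 0 <= (#|` V|%:R : R) <= k%:R by rewrite ler0n n_le_k.
have L2R_le_half : L2R k V <= L2 V / 2.
  exact: le_trans (L2R_le k V)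
    (sqr_mul_div_pow4_le_half k_ge2R n_range (L2_ge0 V) (Delta_le_card_L2 V)).
by move: L2R_le_half; rewrite (L2_split k V); lra.
Qed.
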